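(* Let $(X,A)$, $(Y,B)$, $(U,D)$ be worlds of the canonical model for $\mathbb{PCL}$. If $S_X(Y,B)\in\mathcal{N}(X,A)$ and $(U,D)\in S_X(Y,B)$, then $S_X(U,D)\subseteq S_X(Y,B)$.
   Context: Formulas $\mathcal{L}::=p\mid\bot\mid A\wedge B\mid A\lor B\mid A\to B\mid A>B$; maximal consistent sets relative to the axiom system of $\mathbb{PCL}$ (classical propositional logic, rules (RCEA) from $A\leftrightarrow B$ infer $(A>C)\leftrightarrow(B>C)$, (RCK) from $A\to B$ infer $(C>A)\to(C>B)$, axioms (ID) $A>A$, (R-And) $(A>B)\wedge(A>C)\to(A>(B\wedge C))$, (CM) $(A>B)\wedge(A>C)\to((A\wedge B)>C)$, (OR) $(A>C)\wedge(B>C)\to((A\lor B)>C)$). For maximal consistent $X$: $X^B=\{C\mid B>C\in X\}$, $A\le_X B$ iff $(A\lor B)>A\in X$. Canonical worlds: $\mathcal{W}=\{(X,A)\mid X$ maximal consistent, $A\in X\}$. For $(X,A),(Y,B)\in\mathcal{W}$: $S_X(Y,B)=\{(Z,C)\in\mathcal{W}\mid X^C\subseteq Z,\ C\le_X B,\ B\notin Z\}\cup\{(Y,B)\}$, and $\mathcal{N}(X,A)=\{S_X(Y,B)\mid(Y,B)\in\mathcal{W},\ X^B\subseteq Y\}$. *)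

From Stdlib Require Import List.
Import ListNotations.

Inductive form : Type :=
| Var : nat -> form
| Bot : form
| And : form -> form -> form
| Or : form -> form -> form
| Imp : form -> form -> form
| Cond : form -> form -> form.

Definition Iff (A B : form) : form := And (Imp A B) (Imp B A).

(* Classical propositional logic: all tautological instances, treating
   propositional variables and conditionals A > B as atoms. *)
Fixpoint peval (v : form -> bool) (A : form) : bool :=
  match A with
  | Var _ => v A
  | Bot => false
  | And A1 A2 => andb (peval v A1) (peval v A2)
  | Or A1 A2 => orb (peval v A1) (peval v A2)
  | Imp A1 A2 => orb (negb (peval v A1)) (peval v A2)
  | Cond _ _ => v A
  end.

Definition taut (A : form) : Prop := forall v, peval v A = true.

Inductive Prv : form -> Prop :=
| P_taut : forall A, taut A -> Prv A
| P_MP : forall A B, Prv (Imp A B) -> Prv A -> Prv B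
| P_RCEA : forall A B C, Prv (Iff A B) -> Prv (Iff (Cond A C) (Cond B C))
| P_RCK : forall A B C, Prv (Imp A B) -> Prv (Imp (Cond C A) (Cond C B))
| P_ID : forall A, Prv (Cond A A)
| P_RAnd : forall A B C,
    Prv (Imp (And (Cond A B) (Cond A C)) (Cond A (And B C)))
| P_CM : forall A B C,
    Prv (Imp (And (Cond A B) (Cond A C)) (Cond (And A B) C))
| P_OR : forall A B C,
    Prv (Imp (And (Cond A C) (Cond B C)) (Cond (Or A B) C)).

Definition fset := form -> Prop.

Fixpoint imps (l : list form) (A : form) : form :=
  match l with
  | [] => A
  | x :: l' => Imp x (imps l' A)
  end.

Definition Deriv (X : fset) (A : form) : Prop :=
  exists l : list form, (forall x, In x l -> X x) /\ Prv (imps l A).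

Definition consistent (X : fset) : Prop := ~ Deriv X Bot.

Definition maxcons (X : fset) : Prop :=
  consistent X /\
  forall Y : fset, (forall A, X A -> Y A) -> consistent Y -> forall A, Y A -> X A.

Definition restr (X : fset) (B : form) : fset := fun C => X (Cond B C).

Definition leX (X : fset) (A B : form) : Prop := X (Cond (Or A B) A).

Definition subsetF (X Y : fset) : Prop := forall A, X A -> Y A.

Definition world := (fset * form)%type.

Definition W (w : world) : Prop := maxcons (fst w) /\ fst w (snd w).

Definition wset := world -> Prop.

Definition S_X (X : fset) (w : world) : wset :=
  fun z => (W z /\ subsetF (restr X (snd z)) (fst z) /\ leX X (snd z) (snd w)
            /\ ~ fst z (snd w))
           \/ z = w.

Definition seteq (S T : wset) : Prop := forall z, S z <-> T z.

Definition Nbh (w : world) : wset -> Prop :=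
  fun S => exists v : world, W v /\ subsetF (restr (fst w) (snd v)) (fst v)
                             /\ seteq S (S_X (fst w) v).

(* If (Z,C) lies in S_X(U,D) and (U,D) in S_X(Y,B), then C <=_X D <=_X B.  In PCL,
   (C \/ D) > C and (D \/ B) > D together yield (C \/ D \/ B) > C, from which CM and OR derive
   C <=_X B and C > (B -> D).  The latter lies in X, so B -> D lies in Z because
   X^C is contained in Z; as D is not in Z, neither is B. *)
From Stdlib Require Import List.
Import ListNotations.

Ltac solve_taut := unfold taut, Iff; let v := fresh "v" in intro v; simpl;
  repeat match goal with
    | |- context[peval ?w ?x] => destruct (peval w x)
    | |- context[?w (Cond ?a ?b)] => destruct (w (Cond a b))
    end;
  reflexivity.

Lemma peval_imps v l A :
  peval v (imps l A) = orb (negb (forallb (peval v) l)) (peval v A).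
Proof.
  induction l as [|a l IH]; simpl.
  - destruct (peval v A); reflexivity.
  - rewrite IH. destruct (peval v a), (forallb (peval v) l), (peval v A); reflexivity.
Qed.

Lemma Deriv_MP X a b : Deriv X (Imp a b) -> Deriv X a -> Deriv X b.
Proof.
  intros [l1 [H1 P1]] [l2 [H2 P2]]. exists (l1 ++ l2). split.
  - intros x Hx. apply in_app_or in Hx. destruct Hx; auto.
  - refine (P_MP _ _ (P_MP _ _ (P_taut _ _) P1) P2).
    intro v. simpl. rewrite !peval_imps, forallb_app. simpl.
    destruct (forallb (peval v) l1), (forallb (peval v) l2), (peval v a), (peval v b);
      reflexivity.
Qed.

Lemma Deriv_in (X : fset) a : X a -> Deriv X a.
Proof.
  intro H. exists [a]. split.
  - intros x [->|[]]; exact H.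
  - apply P_taut. solve_taut.
Qed.

Lemma Deriv_prv (X : fset) a : Prv a -> Deriv X a.
Proof. intro H. exists []. split; [intros x []|exact H]. Qed.

Lemma Deriv_imps X l B :
  Deriv X (imps l B) -> (forall x, In x l -> Deriv X x) -> Deriv X B.
Proof.
  revert B. induction l as [|x l IH]; simpl; intros B H Hl; auto.
  apply IH; auto. eapply Deriv_MP; eauto.
Qed.

Section MaximalConsistent.
Variable X : fset.
Hypothesis MX : maxcons X.

Lemma maxcons_closed a : Deriv X a -> X a.
Proof.
  destruct MX as [Hc Hmax]. intro Ha.
  apply (Hmax (fun f => X f \/ f = a)); [intros; left; auto | | right; auto].
  intros [l [Hl Hp]]. apply Hc. apply (Deriv_imps X l Bot (Deriv_prv X _ Hp)).
  intros x Hx. destruct (Hl x Hx) as [H| ->]; [apply Deriv_in|]; auto.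
Qed.

Lemma maxcons_mp a b : X (Imp a b) -> X a -> X b.
Proof. intros H1 H2. apply maxcons_closed. eapply Deriv_MP; apply Deriv_in; eauto. Qed.

Lemma maxcons_prv a : Prv a -> X a.
Proof. intro H. apply maxcons_closed, Deriv_prv, H. Qed.

Lemma maxcons_and a b : X a -> X b -> X (And a b).
Proof.
  intros H1 H2. apply (maxcons_mp b); auto. apply (maxcons_mp a); auto.
  apply maxcons_prv, P_taut. solve_taut.
Qed.

Lemma maxcons_prv_imp2 a b c : Prv (Imp (And a b) c) -> X a -> X b -> X c.
Proof. intros P Ha Hb. eapply maxcons_mp; [apply maxcons_prv, P|apply maxcons_and; auto]. Qed.

Lemma cond_weaken a b c : X (Cond a b) -> taut (Imp b c) -> X (Cond a c).
Proof. intros H T. eapply maxcons_mp; eauto. apply maxcons_prv, P_RCK, P_taut, T. Qed.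

Lemma cond_ant_equiv a b c : X (Cond a c) -> taut (Iff a b) -> X (Cond b c).
Proof.
  intros H T. eapply maxcons_mp; eauto. eapply maxcons_mp.
  - apply maxcons_prv. apply (P_MP (Iff (Cond a c) (Cond b c))).
    + apply P_taut. solve_taut.
    + apply P_RCEA, P_taut, T.
  - exact H.
Qed.

Lemma cond_id a : X (Cond a a).
Proof. apply maxcons_prv, P_ID. Qed.

Lemma cond_and a b c : X (Cond a b) -> X (Cond a c) -> X (Cond a (And b c)).
Proof. apply maxcons_prv_imp2, P_RAnd. Qed.

Lemma cond_cm a b c : X (Cond a b) -> X (Cond a c) -> X (Cond (And a b) c).
Proof. apply maxcons_prv_imp2, P_CM. Qed.

Lemma cond_or a b c : X (Cond a c) -> X (Cond b c) -> X (Cond (Or a b) c).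
Proof. apply maxcons_prv_imp2, P_OR. Qed.

Lemma cond_or_extend a b c :
  X (Cond a c) -> taut (Imp (And b (Imp a Bot)) c) -> X (Cond (Or a b) c).
Proof.
  intros H T.
  apply (cond_ant_equiv (Or a (And b (Imp a Bot)))); [|solve_taut].
  apply cond_or; [exact H|exact (cond_weaken _ _ _ (cond_id _) T)].
Qed.

Lemma cond_cut a b c : X (Cond a b) -> X (Cond (And a b) c) -> X (Cond a c).
Proof.
  intros Hab Hc.
  assert (Himp : X (Cond a (Imp b c))).
  { apply (cond_ant_equiv (Or (And a b) a)); [|solve_taut].
    apply cond_or_extend; [|solve_taut].
    eapply cond_weaken; [exact Hc|solve_taut]. }
  eapply cond_weaken; [apply cond_and; [exact Hab|exact Himp]|solve_taut].
Qed.

Section Chain.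
Variables B C D : form.
Hypothesis leCD : leX X C D.
Hypothesis leDB : leX X D B.

Lemma leX_chain_or_min : X (Cond (Or C (Or D B)) C).
Proof.
  assert (H : X (Cond (Or C (Or D B)) (Or C D))).
  { apply cond_or; [eapply cond_weaken; [apply cond_id|solve_taut]|].
    eapply cond_weaken; [exact leDB|solve_taut]. }
  eapply cond_cut; [exact H|].
  eapply cond_ant_equiv; [exact leCD|solve_taut].
Qed.

Lemma leX_trans : leX X C B.
Proof.
  pose proof leX_chain_or_min as H.
  assert (HCB : X (Cond (Or C (Or D B)) (Or C B))) by (eapply cond_weaken; [exact H|solve_taut]).
  eapply cond_ant_equiv; [apply cond_cm; [exact HCB|exact H]|solve_taut].
Qed.

Lemma leX_chain_cond_imp : X (Cond C (Imp B D)).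
Proof.
  assert (H : X (Cond (Or C (Or D B)) (Imp B D))).
  { apply (cond_ant_equiv (Or (Or D B) C)); [|solve_taut].
    apply cond_or_extend; [|solve_taut].
    eapply cond_weaken; [exact leDB|solve_taut]. }
  eapply cond_ant_equiv; [apply cond_cm; [exact leX_chain_or_min|exact H]|solve_taut].
Qed.

End Chain.

End MaximalConsistent.

Lemma S_X_sub X Y U B D : maxcons X ->
  S_X X (Y, B) (U, D) -> forall z, S_X X (U, D) z -> S_X X (Y, B) z.
Proof.
  intros MX [HUD | e] z Hz; [|injection e as -> ->; exact Hz].
  destruct Hz as [[Wz [subz [leCD notDz]]] | ->]; [|left; exact HUD].
  destruct HUD as [_ [_ [leDB _]]].
  destruct z as [Z C]. simpl in *. left. simpl.
  split; [exact Wz|]. split; [exact subz|]. split.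
  - exact (leX_trans X MX B C D leCD leDB).
  - intro ZB. apply notDz. destruct Wz as [MZ _].
    apply (maxcons_mp Z MZ B); [|exact ZB].
    apply subz, (leX_chain_cond_imp X MX B C D leCD leDB).
Qed.

Theorem mainTheorem7 (X Y U : fset) (A B D : form) :
  W (X, A) -> W (Y, B) -> W (U, D) ->
  Nbh (X, A) (S_X X (Y, B)) ->
  S_X X (Y, B) (U, D) ->
  forall z : world, S_X X (U, D) z -> S_X X (Y, B) z.
Proof.
  intros [MX _] _ _ _. apply S_X_sub, MX.
Qed.
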